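(* Let $n\ge 3$, $d\ge 1$, and set $c=\frac{3.9d}{n+2}$. For every integer $r$ with $c<r<1.1c$, the number of counter-points $p\in[n]^d$ with $\tau_1(p)=r$ is at least \[\left(1-2de^{-d/(40000(n+2))}\right)\binom{d}{r}2^r(n-2)^{d-r}.\]
   Context: Let $[n]=\{1,\dots,n\}$. For $p\in[n]^d$ and $i\in[n]$ let $\pi_i(p)=|\{j\in[d]:p_j=i\}|$ and $\tau_1(p)=\pi_1(p)+\pi_n(p)$. A point $p\in[n]^d$ is a counter-point if $c<\tau_1(p)<1.1c$ and $\frac{0.99(d-\tau_1(p))}{n-2}\le\pi_i(p)\le\frac{1.01(d-\tau_1(p))}{n-2}$ for all $1<i<n$. *)

From HB Require Import structures.
From mathcomp Require Import all_boot all_order all_algebra.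
From mathcomp Require Import reals.
From mathcomp Require Import sequences exp.
Set Implicit Arguments. Unset Strict Implicit. Unset Printing Implicit Defensive.
Import Order.TTheory GRing.Theory Num.Theory.
Local Open Scope ring_scope.

(* A point p of [n]^d is a finite function 'I_d -> 'I_n; the value k : 'I_n
   stands for the element k+1 of [n] = {1,...,n}. *)
Definition point (n d : nat) := {ffun 'I_d -> 'I_n}.

Definition piv (n d : nat) (p : point n d) (i : nat) : nat :=
  #|[set j : 'I_d | ((p j).+1 == i)%N]|.

Definition tau1 (n d : nat) (p : point n d) : nat := (piv p 1 + piv p n)%N.

Definition cval (R : realType) (n d : nat) : R := (39 / 10 * d%:R) / (n%:R + 2).

Definition counter_point (R : realType) (n d : nat) (p : point n d) : bool :=
  [&& cval R n d < ((tau1 p)%:R : R),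
      ((tau1 p)%:R : R) < 11 / 10 * cval R n d &
      [forall i : 'I_n.+1, ((1 < i)%N && (i < n)%N) ==>
        ((99 / 100 * (d%:R - (tau1 p)%:R) / (n%:R - 2) <= ((piv p i)%:R : R))
         && (((piv p i)%:R : R) <= 101 / 100 * (d%:R - (tau1 p)%:R) / (n%:R - 2)))]].

From HB Require Import structures.
From mathcomp Require Import all_boot all_order all_algebra.
From mathcomp Require Import reals.
From mathcomp Require Import sequences exp.
From mathcomp Require Import zify ring lra.
Import Order.TTheory GRing.Theory Num.Theory.
Local Open Scope ring_scope.

(* Fixing tau_1(p) = r, the remaining d - r coordinates range freely over the
   n - 2 interior values, so that the sum of t ^ pi_i(p) over these points is
   'C(d, r) 2^r (t + n - 3)^(d - r).  Taking t = e^(+-1/100) gives Chernoff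
   bounds: at most a fraction e^(-d / (40000 (n + 2))) of the points have
   pi_i(p) off by more than 1% from (d - r) / (n - 2).  A union bound over the
   n - 2 interior values i and both directions leaves at least a fraction
   1 - 2 (n - 2) e^(-d / (40000 (n + 2))) of counter-points; when n - 2 > d
   the claimed bound is nonpositive anyway. *)

Lemma piv_sum (n d : nat) (p : point n d) (i : nat) :
  piv p i = (\sum_j ((p j).+1 == i))%N.
Proof.
rewrite /piv -sum1_card big_mkcond [RHS]big_mkcond.
by apply: eq_bigr => j _; rewrite inE; case: eqP.
Qed.

Lemma sumr_Mn_eqS (V : nmodType) (n k : nat) (c : V) : (0 < k <= n)%N ->
  \sum_(u < n) c *+ (u.+1 == k) = c.
Proof.
case/andP=> k_gt0 k_le_n; have k'_lt_n : (k.-1 < n)%N by lia.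
rewrite (bigD1 (Ordinal k'_lt_n)) //= prednK // eqxx big1 ?addr0 // => u.
rewrite -val_eqE /= => u_neq; rewrite (_ : (u.+1 == k) = false) //.
by apply/negbTE; apply: contra u_neq => /eqP <-.
Qed.

Lemma expr_indicator3 (R : comNzRingType) (x y z : R) (a b c : bool) :
  (a + b + c <= 1)%N ->
  x ^+ a * y ^+ b * z ^+ c = 1 + (x - 1) *+ a + (y - 1) *+ b + (z - 1) *+ c.
Proof. by case: a; case: b; case: c => //= _; ring. Qed.

Lemma coef_exprD_CX (R : comNzRingType) (a b : R) (d r : nat) :
  ((a%:P + b *: 'X) ^+ d)`_r = 'C(d, r)%:R * b ^+ r * a ^+ (d - r).
Proof.
have term i : (a%:P) ^+ (d - i) * (b *: 'X) ^+ i *+ 'C(d, i) =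
    ('C(d, i)%:R * b ^+ i * a ^+ (d - i)) *: 'X^i.
  rewrite exprZn -rmorphXn /= mul_polyC scalerA scalerMnl -mulr_natl.
  by congr (_ *: _); ring.
rewrite exprDn (eq_bigr _ (fun (i : 'I_d.+1) _ => term i)) coef_sumMXn.
have [r_le_d | d_lt_r] := leqP r d.
  by rewrite (big_pred1 (Ordinal (r_le_d : r < d.+1)%N)).
rewrite bin_small // mul0r mul0r big_pred0 // => i.
by apply/negbTE; rewrite neq_ltn (leq_trans (ltn_ord i)).
Qed.

Section PivGeneratingFunction.
Variables (R : comNzRingType) (n d i : nat) (t : R).

Definition piv_weight (u : 'I_n) : {poly R} :=
  'X ^+ (u.+1 == 1)%N * 'X ^+ (u.+1 == n) * (t ^+ (u.+1 == i))%:P.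

Lemma prod_piv_weight (p : point n d) :
  \prod_j piv_weight (p j) = t ^+ piv p i *: 'X ^+ tau1 p.
Proof.
rewrite /piv_weight !big_split /= !prodrXr -rmorph_prod /= prodrXr.
by rewrite /tau1 !piv_sum exprD -mul_polyC mulrC.
Qed.

Hypotheses (i_gt1 : (1 < i)%N) (i_lt_n : (i < n)%N).

Lemma sum_piv_weight : \sum_u piv_weight u = (t + (n - 3)%:R)%:P + 2 *: 'X.
Proof.
have disjoint u : ((u.+1 == 1)%N + (u.+1 == n) + (u.+1 == i) <= 1)%N.
  by case: eqP; case: eqP; case: eqP; lia.
under eq_bigr => u _ do
  rewrite /piv_weight rmorphXn (@expr_indicator3 _ _ _ _ _ _ _ (disjoint u)).
rewrite !big_split /= !sumr_Mn_eqS; try lia.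
rewrite sumr_const card_ord natrB; last by lia.
by rewrite rmorphD rmorphB /= !polyC_natr scaler_nat; ring.
Qed.

Lemma sum_tau1_exprpiv (r : nat) :
  \sum_(p : point n d | tau1 p == r) t ^+ piv p i =
  ('C(d, r) * 2 ^ r)%:R * (t + (n - 3)%:R) ^+ (d - r).
Proof.
have expand : (\sum_u piv_weight u) ^+ d =
    \sum_(p : point n d) t ^+ piv p i *: 'X ^+ tau1 p.
  rewrite -[in LHS](card_ord d) -prodr_const bigA_distr_bigA.
  by apply: eq_bigr => p _; exact: prod_piv_weight.
move: (congr1 (fun q : {poly R} => q`_r) expand).
by rewrite sum_piv_weight coef_exprD_CX coef_sumMXn natrM natrX => ->.
Qed.

End PivGeneratingFunction.

Lemma card_tau1 (n d r : nat) : (3 <= n)%N ->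
  #|[set p : point n d | tau1 p == r]| =
  ('C(d, r) * 2 ^ r * (n - 2) ^ (d - r))%N.
Proof.
move=> n_ge3; apply/eqP; rewrite -(eqr_nat int).
have := @sum_tau1_exprpiv int n d 2 1 isT n_ge3 r.
under eq_bigr do rewrite expr1n.
rewrite sumr_const cardsE => ->.
have -> : 1 + (n - 3)%:R = (n - 2)%:R :> int by lia.
by rewrite !natrM !natrX.
Qed.

Section ExponentialBounds.
Variable R : realType.

Lemma exp_markov (T : finType) (P : pred T) (f : T -> nat) (s b : R) :
  #|[set x | P x && (b <= s * (f x)%:R)]|%:R * expR b <=
  \sum_(x | P x) expR s ^+ f x.
Proof.
rewrite -sum1_card natr_sum mulr_suml [leLHS]big_mkcond [leRHS]big_mkcond /=.
apply: ler_sum => x _; rewrite inE; case: (P x) => //=.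
case: ifP => [b_le | _]; last by rewrite exprn_ge0 ?expR_ge0.
by rewrite mul1r -expRM_natr ler_expR.
Qed.

Lemma exprD_le_expR (k x : R) (m : nat) : 0 < k -> 0 <= k + x ->
  (k + x) ^+ m <= k ^+ m * expR (m%:R * (x / k)).
Proof.
move=> k_gt0 kx_ge0.
have -> : k + x = k * (1 + x / k) by field; rewrite gt_eqF.
rewrite exprMn expRM_natl ler_pM2l ?exprn_gt0 //.
apply: lerXn2r; rewrite ?nnegrE ?expR_ge0 ?expR_ge1Dx //.
rewrite (_ : 1 + x / k = (k + x) / k); first by rewrite divr_ge0 // ltW.
by field; rewrite gt_eqF.
Qed.

Lemma chernoff_piv (n d r i : nat) (s b : R) : (1 < i < n)%N ->
  #|[set p : point n d | (tau1 p == r) && (b <= s * (piv p i)%:R)]|%:R <=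
  ('C(d, r) * 2 ^ r * (n - 2) ^ (d - r))%:R *
  expR ((d - r)%:R * ((expR s - 1) / (n - 2)%:R) - b).
Proof.
case/andP=> i_gt1 i_lt_n.
have markov :=
  @exp_markov _ (fun p : point n d => tau1 p == r) (fun p => piv p i) s b.
rewrite sum_tau1_exprpiv // in markov.
have n2_gt0 : (0 < (n - 2)%:R :> R) by rewrite ltr0n; lia.
have binom := @exprD_le_expR (n - 2)%:R (expR s - 1) (d - r) n2_gt0.
rewrite expRD expRN mulrA ler_pdivlMr ?expR_gt0 //; apply: (le_trans markov).
rewrite [X in _ <= X * _]natrM natrX -mulrA; apply: ler_wpM2l => //.
have -> : expR s + (n - 3)%:R = (n - 2)%:R + (expR s - 1) :> R.
  by rewrite (natrB _ (_ : 3 <= n)%N) ?natrB; [lra | lia | lia].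
apply: binom; have := expR_gt0 s.
have : (1 <= (n - 2)%:R :> R) by rewrite ler1n; lia.
lra.
Qed.

Lemma expR_le_invB (x : R) : x < 1 -> expR x <= (1 - x)^-1.
Proof.
move=> x_lt1.
rewrite -[expR x]invrK lef_pV2 ?posrE ?invr_gt0 ?expR_gt0 ?subr_gt0 //.
by rewrite -expRN expR_ge1Dx.
Qed.

Lemma expR_hundredth_le : expR (1 / 100 : R) <= 1 + 1006 / (100 * 1000).
Proof.
have -> : (1 / 100 : R) = 10%:R * (1 / 1000) by lra.
rewrite expRM_natl; apply: (@le_trans _ _ ((1000 / 999) ^+ 10)).
  apply: lerXn2r; rewrite ?nnegrE ?expR_ge0 //; first lra.
  apply: le_trans (_ : (1 - 1 / 1000)^-1 <= _).
    by apply: expR_le_invB; lra.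
  by rewrite -[leRHS]invf_div lef_pV2 ?posrE; lra.
by rewrite !exprS expr0; lra.
Qed.

Lemma expRN_hundredth_le : expR (- (1 / 100) : R) <= 1 - 994 / (100 * 1000).
Proof.
have -> : (- (1 / 100) : R) = 10%:R * (- (1 / 1000)) by lra.
rewrite expRM_natl; apply: (@le_trans _ _ ((1000 / 1001) ^+ 10)).
  apply: lerXn2r; rewrite ?nnegrE ?expR_ge0 //; first lra.
  apply: le_trans (_ : (1 - - (1 / 1000))^-1 <= _).
    by apply: expR_le_invB; lra.
  by rewrite -[leRHS]invf_div lef_pV2 ?posrE; lra.
by rewrite !exprS expr0; lra.
Qed.

(* r (n + 2) < 4.29 d gives (d - r)(n + 2) >= d (n - 2.29), and
   1.6 (n - 2.29) >= n - 2 as soon as n >= 3. *)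
Lemma deviation_exponent_le (N D x k : R) : 3 <= N -> 0 <= D -> 0 <= x ->
  x * (N + 2) < 11 / 10 * (39 / 10 * D) -> k <= - (4 / (100 * 1000)) ->
  (D - x) * (k / (N - 2)) <= - (D / (4 * 10 ^+ 4 * (N + 2))).
Proof.
move=> N_ge3 D_ge0 x_ge0 x_lt k_le.
have scale_gt0 : 0 < 4 * 10 ^+ 4 * (N + 2).
  by rewrite !mulr_gt0 ?exprn_gt0 //; lra.
rewrite mulrA ler_pdivrMr ?subr_gt0; last lra.
rewrite mulNr lerNr mulrAC ler_pdivrMr //.
have x_le : x * (N + 2) <= 429 / 100 * D by lra.
have Dx_ge : D * (N - 229 / 100) <= (D - x) * (N + 2) by nra.
have Dx_ge0 : 0 <= (D - x) * (N + 2) by nra.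
nra.
Qed.

End ExponentialBounds.

Section CounterPoints.
Variables (R : realType) (n d r : nat).
Hypotheses (n_ge3 : (3 <= n)%N) (r_lt_c : r%:R < 11 / 10 * cval R n d).

Local Notation K := (('C(d, r) * 2 ^ r * (n - 2) ^ (d - r))%:R : R).
Local Notation E := (expR (- (d%:R / (4 * 10 ^+ 4 * (n%:R + 2)))) : R).

Lemma r_mul_lt : r%:R * (n%:R + 2) < 11 / 10 * (39 / 10 * d%:R) :> R.
Proof. by move: r_lt_c; rewrite /cval mulrA ltr_pdivlMr // ltr_wpDl. Qed.

Lemma r_lt_d : (r < d)%N.
Proof.
have := r_mul_lt; have : (3 <= n%:R :> R) by rewrite ler_nat.
have := ler0n R r; rewrite -(ltr_nat R); nra.
Qed.

(* [s * a <= s * b] stands for [a <= b] when s > 0 and for [b <= a] when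
   s < 0, the shape in which the exponential Markov bound applies. *)
Definition deviation_set (s theta : R) (i : nat) :=
  [set p : point n d | (tau1 p == r) &&
     (s * (theta * (d%:R - r%:R) / (n%:R - 2)) <= s * (piv p i)%:R)].

Lemma card_deviation_set_le (s theta : R) (i : nat) : (1 < i < n)%N ->
  expR s - 1 - s * theta <= - (4 / (100 * 1000)) ->
  #|deviation_set s theta i|%:R <= E * K.
Proof.
move=> i_mid exp_le; rewrite /deviation_set [leRHS]mulrC.
apply: le_trans (chernoff_piv _ _ _ _ _ s _ i_mid) _.
apply: ler_wpM2l => //; rewrite ler_expR.
have n_ge3R : (3 <= n%:R :> R) by rewrite ler_nat.
rewrite natrB ?(ltnW r_lt_d) // natrB; last by lia.
have -> : (d%:R - r%:R) * ((expR s - 1) / (n%:R - 2%:R)) -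
    s * (theta * (d%:R - r%:R) / (n%:R - 2)) =
    (d%:R - r%:R) * ((expR s - 1 - s * theta) / (n%:R - 2)) :> R.
  by field; lra.
by apply: deviation_exponent_le => //; exact: r_mul_lt.
Qed.

Local Notation upper_dev i := (deviation_set (1 / 100) (101 / 100) i).
Local Notation lower_dev i := (deviation_set (- (1 / 100)) (99 / 100) i).

Hypothesis c_lt_r : cval R n d < r%:R.

Lemma not_counter_point_deviation (p : point n d) :
  tau1 p = r -> ~~ counter_point R p ->
  exists k : 'I_(n - 2), p \in upper_dev k.+2 :|: lower_dev k.+2.
Proof.
rewrite /counter_point => tau_p; rewrite tau_p c_lt_r r_lt_c /=.
case/forallPn=> i; rewrite negb_imply => /andP [/andP [i_gt1 i_lt_n] bad].
have k_lt : (i - 2 < n - 2)%N by lia.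
exists (Ordinal k_lt); rewrite /= (_ : (i - 2).+2 = i); last by lia.
rewrite !inE tau_p eqxx /=; move: bad; rewrite negb_and -!ltNge.
by case/orP=> dev; apply/orP; [right | left]; lra.
Qed.

Lemma card_tau1_le_counter :
  K <= #|[set p : point n d | counter_point R p && (tau1 p == r)]|%:R +
       (n - 2)%:R * (2 * (E * K)).
Proof.
set good := [set p | _].
have cover : [set p : point n d | tau1 p == r] \subset
    good :|: \bigcup_(k < n - 2) (upper_dev k.+2 :|: lower_dev k.+2).
  apply/subsetP => p; rewrite inE => /eqP tau_p.
  have [cp | /(not_counter_point_deviation _ tau_p) [k dev]] :=
    boolP (counter_point R p).
    by rewrite inE inE cp tau_p eqxx.
  by rewrite inE; apply/orP; right; apply/bigcupP; exists k.
have union_bound : (#|[set p : point n d | tau1 p == r]| <=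
    #|good| + \sum_(k < n - 2) (#|upper_dev k.+2| + #|lower_dev k.+2|))%N.
  apply: leq_trans (subset_leq_card cover) _.
  rewrite cardsU; apply: leq_trans (leq_subr _ _) _.
  rewrite leq_add2l; apply: leq_trans (unstable.card_big_setU _ _ _) _.
  by apply: leq_sum => k _; rewrite cardsU leq_subr.
have dev_le (k : 'I_(n - 2)) :
    (#|upper_dev k.+2| + #|lower_dev k.+2|)%:R <= 2 * (E * K).
  have k_mid : (1 < k.+2 < n)%N by have := ltn_ord k; lia.
  rewrite natrD [leRHS]mulr_natl mulr2n.
  apply: lerD; apply: card_deviation_set_le => //.
    by have := @expR_hundredth_le R; lra.
  by have := @expRN_hundredth_le R; lra.
rewrite [leLHS](_ : K = #|[set p : point n d | tau1 p == r]|%:R); last first.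
  by rewrite card_tau1.
apply: le_trans (_ : _ <= #|good|%:R + \sum_(k < n - 2) 2 * (E * K)) _.
  rewrite -(ler_nat R) natrD natr_sum in union_bound.
  apply: (le_trans union_bound); rewrite lerD2l; apply: ler_sum => k _.
  exact: dev_le.
by rewrite sumr_const card_ord [in leRHS]mulr_natl.
Qed.

End CounterPoints.

Theorem lemma22 (R : realType) (n d r : nat) :
  (3 <= n)%N -> (1 <= d)%N ->
  cval R n d < r%:R -> r%:R < 11 / 10 * cval R n d ->
  ((1 : R) - 2 * d%:R * expR (- (d%:R / (4 * 10 ^+ 4 * (n%:R + 2))))) *
    ('C(d, r) * 2 ^ r * (n - 2) ^ (d - r))%:R
  <= (#|[set p : point n d | counter_point R p && (tau1 p == r)]|)%:R.
Proof.
move=> n_ge3 d_ge1 c_lt_r r_lt_c.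
have := @card_tau1_le_counter R n d r n_ge3 r_lt_c c_lt_r.
set X := d%:R / _; set K := ('C(d, r) * _ * _)%:R; set good := #|_|%:R => K_le.
have E_ge0 := expR_ge0 (- X); have K_ge0 : 0 <= K by rewrite ler0n.
have d_ge1R : 1 <= d%:R :> R by rewrite ler1n.
have [d_lt_n2 | n2_le_d] := ltnP d (n - 2).
  have X_le : X <= 1 / 2.
    have : d%:R < n%:R :> R by rewrite ltr_nat; lia.
    have : 1 <= 10 ^+ 4 :> R by rewrite exprn_ege1 // ler1n.
    rewrite /X ler_pdivrMr; first nra.
    by rewrite !mulr_gt0 ?exprn_gt0 //; have := ler0n R n; lra.
  have E_ge : 1 / 2 <= expR (- X).
    by have := expR_ge1Dx (- X); clearbody X; lra.
  apply: le_trans (_ : 0 <= good); last exact: ler0n.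
  by rewrite mulr_le0_ge0 //; nra.
have : 0 <= (d%:R - (n - 2)%:R) * expR (- X) * K.
  by rewrite !mulr_ge0 // subr_ge0 ler_nat.
nra.
Qed.
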